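(* In a run of Algorithm 1 (described in the context), let $(\mathcal R_k,\delta_k)$ be the open leaf selected at the $k$-th iteration. If the overlap $\gamma$ is positive and the algorithm does not terminate sooner, then there is a $k$ such that $\mathcal R_k\subset\psi\mathbb B+\theta_o$ for some $\theta_o\in\Theta$.
   Context: Problem data: positive integers $p,n,m,d,l$; a convex cone $\mathcal K\subseteq\mathbb R^d$ (a product of convex cones); functions $f,g,h$ on $\mathbb R^p\times\mathbb R^n\times\mathbb R^m$ with values in $\mathbb R,\mathbb R^l,\mathbb R^d$, such that for each fixed $\delta\in\{0,1\}^m$, $(\theta,x)\mapsto f(\theta,x,\delta)$ is jointly convex and $(\theta,x)\mapsto g(\theta,x,\delta),h(\theta,x,\delta)$ are affine. $V^*_\delta(\theta)\in\mathbb R\cup\{+\infty\}$ is the optimal value of: minimize $f(\theta,x,\delta)$ over $x$ s.t. $g(\theta,x,\delta)=0$, $h(\theta,x,\delta)\in\mathcal K$; $\Theta^*_\delta$ is its feasible parameter set; $V^*=\min_\delta V^*_\delta$, $\Theta^*=\bigcup_\delta\Theta^*_\delta$. $\Theta\subseteq\Theta^*$ is a convex full-dimensional polytope, $\epsilon_{\mathrm a},\epsilon_{\mathrm r}$ are tolerances, $\mathbb B$ is the closed Euclidean unit ball. A commutation $\delta$ is $\epsilon$-suboptimal at $\theta$ if $V^*_\delta(\theta)-V^*(\theta)\le\max\{\epsilon_{\mathrm a},\epsilon_{\mathrm r}V^*(\theta)\}$, and in a set if at each of its points. $\Delta=\{\delta:\Theta^*_\delta\cap\Theta\ne\emptyset\}$.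 Overlap $\gamma$: the largest $\gamma\ge0$ such that for every $\theta\in\Theta$ some $\delta\in\Delta$ is $\epsilon$-suboptimal in $(\gamma\mathbb B+\theta)\cap\Theta$. Variability $\sigma_\delta$ of $\delta\in\Delta$: the largest $\sigma>0$ such that for every $\theta_o\in\Theta^*_\delta$, with $\Theta_\sigma=(\sigma\mathbb B+\theta_o)\cap\Theta^*_\delta$, one has $\max_{\Theta_\sigma}V^*_\delta-\min_{\Theta_\sigma}V^*_\delta<\max\{\epsilon_{\mathrm a},\epsilon_{\mathrm r}\min_{\Theta_\sigma}V^*\}$. Condition number $\psi=\min\{\gamma,\min_{\delta\in\Delta}\sigma_\delta\}$. For a simplex $\mathcal R$ with vertices $v_i$ and a commutation $\delta$, $\bar V_\delta(\theta)=\sum_i\alpha_iV^*_\delta(v_i)$ for barycentric coordinates $\alpha$ of $\theta\in\mathcal R$. Let $\mathcal P$ be the set of pairs $(\theta,\delta')$, $\theta\in\mathcal R$, $\delta'\ne\delta$, $\theta\in\Theta^*_{\delta'}$; $\bar e_{\mathrm a}(\mathcal R)=\sup_{\mathcal P}(\bar V_\delta(\theta)-V^*_{\delta'}(\theta))$, $\mu=\min_{\mathcal P}V^*_{\delta'}(\theta)$, $\bar e_{\mathrm r}(\mathcal R)=\bar e_{\mathrm a}(\mathcal R)/\mu$. Problem $D^{\mathcal R}_\delta$: maximize $\epsilon$ over $\theta\in\mathcal R$, $\epsilon\in\mathbb R$, $\delta'\in\{\delta''\ne\delta:\mathcal R\subseteq\Theta^*_{\delta''}\}$, subject to $\bar V_\delta(\theta)-\epsilon\ge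 V^*_{\delta'}(\theta)$ and $\epsilon\ge\max\{\epsilon_{\mathrm a},\epsilon_{\mathrm r}\mu\}$; $\delta^*$ is the $\delta'$-component of a maximizer. SPLIT$(\mathcal R)$: pick vertices $\bar v,\bar v'$ of $\mathcal R$ at maximal distance, $v_{\mathrm{mid}}=(\bar v+\bar v')/2$, return $\mathcal S_1=\mathrm{co}((\mathcal V(\mathcal R)\setminus\{\bar v\})\cup\{v_{\mathrm{mid}}\})$, $\mathcal S_2=\mathrm{co}((\mathcal V(\mathcal R)\setminus\{\bar v'\})\cup\{v_{\mathrm{mid}}\})$. Algorithm 1 (all subproblems solved exactly): Input is a finite binary tree whose leaves $(\mathcal R_i,\delta_i)$ are $p$-simplices with $\mathcal R_i\subseteq\Theta^*_{\delta_i}$ and $\bigcup_i\mathcal R_i=\Theta$; all leaves marked open. While an open leaf exists: take the most recently created open leaf $(\mathcal R,\delta)$ (one iteration). If $\mathcal P=\emptyset$, or $\bar e_{\mathrm a}(\mathcal R)\le\epsilon_{\mathrm a}$, or $\bar e_{\mathrm r}(\mathcal R)\le\epsilon_{\mathrm r}$: close the leaf. Otherwise solve $D^{\mathcal R}_\delta$. If feasible: if $\max_{\mathcal R}V^*_\delta-\min_{\mathcal R}V^*_\delta<\max\{\epsilon_{\mathrm a},\epsilon_{\mathrm r}\min_{\mathcal R}V^*\}$, replace the open leaf by $(\mathcal R,\delta^* )$; else add open children $(\mathcal S_1,\delta^* ),(\mathcal S_2,\delta^* )$ from SPLIT$(\mathcal R)$. If infeasible, add open children $(\mathcal S_1,\delta),(\mathcal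 S_2,\delta)$. *)

From HB Require Import structures.
From mathcomp Require Import all_boot all_order all_algebra.
From mathcomp Require Import all_classical all_reals all_analysis.

Set Implicit Arguments.
Unset Strict Implicit.
Unset Printing Implicit Defensive.

Import Order.TTheory GRing.Theory Num.Theory.
Local Open Scope classical_set_scope.
Local Open Scope ring_scope.

(* Euclidean norm (the analysis library's norm on 'rV is the max-norm) *)
Definition enorm (R : realType) (k : nat) (x : 'rV[R]_k) : R :=
  Num.sqrt (\sum_(i < k) x ord0 i ^+ 2).

Definition cball (R : realType) (k : nat) (c : 'rV[R]_k) (r : R) : set 'rV[R]_k :=
  [set x | enorm (x - c) <= r].

(* closed ball  r B + c  with an extended-real radius r (r = +oo gives R^k) *)
Definition ecball (R : realType) (k : nat) (c : 'rV[R]_k) (r : \bar R) : set 'rV[R]_k :=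
  [set x | ((enorm (x - c))%:E <= r)%E].

Definition conv_fam (R : realType) (k N : nat) (w : 'I_N -> 'rV[R]_k) : set 'rV[R]_k :=
  [set x | exists a : 'I_N -> R, (forall i, 0 <= a i) /\ \sum_(i < N) a i = 1 /\
                                  x = \sum_(i < N) a i *: w i].

Definition full_dim_polytope (R : realType) (k : nat) (T : set 'rV[R]_k) : Prop :=
  (exists (N : nat) (w : 'I_N -> 'rV[R]_k), T = conv_fam w) /\
  (exists c (r : R), 0 < r /\ cball c r `<=` T).

Definition convex_cone (R : realType) (k : nat) (K : set 'rV[R]_k) : Prop :=
  forall x y (a b : R), K x -> K y -> 0 <= a -> 0 <= b -> K (a *: x + b *: y).

Definition jointly_convex (R : realType) (p n : nat) (F : 'rV[R]_p -> 'rV[R]_n -> R) :=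
  forall th1 x1 th2 x2 (t : R), 0 <= t <= 1 ->
    F (t *: th1 + (1 - t) *: th2) (t *: x1 + (1 - t) *: x2) <=
    t * F th1 x1 + (1 - t) * F th2 x2.

Definition jointly_affine (R : realType) (p n k : nat)
  (F : 'rV[R]_p -> 'rV[R]_n -> 'rV[R]_k) :=
  forall th1 x1 th2 x2 (t : R),
    F (t *: th1 + (1 - t) *: th2) (t *: x1 + (1 - t) *: x2) =
    t *: F th1 x1 + (1 - t) *: F th2 x2.

Definition comm (m : nat) := {ffun 'I_m -> bool}.

Definition bin (R : realType) (m : nat) (dl : comm m) : 'rV[R]_m :=
  \row_(i < m) (dl i)%:R.

Record data (R : realType) (p n m d l : nat) := Data {
  pf : 'rV[R]_p -> 'rV[R]_n -> 'rV[R]_m -> R;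
  pg : 'rV[R]_p -> 'rV[R]_n -> 'rV[R]_m -> 'rV[R]_l;
  ph : 'rV[R]_p -> 'rV[R]_n -> 'rV[R]_m -> 'rV[R]_d;
  pK : set 'rV[R]_d;
  eps_a : R;
  eps_r : R;
  Theta : set 'rV[R]_p
}.

Section Problem.
Context {R : realType} {p n m d l : nat} (D : data R p n m d l).

Definition feas (dl : comm m) (th : 'rV[R]_p) : set 'rV[R]_n :=
  [set x | pg D th x (bin R dl) = 0 /\ pK D (ph D th x (bin R dl))].

(* V*_delta(theta) : optimal value (+oo if infeasible) *)
Definition Vstar (dl : comm m) (th : 'rV[R]_p) : \bar R :=
  ereal_inf [set (pf D th x (bin R dl))%:E | x in feas dl th].

Definition Thstar (dl : comm m) : set 'rV[R]_p :=
  [set th | exists x, feas dl th x].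

Definition Vmin (th : 'rV[R]_p) : \bar R :=
  \big[Order.min/+oo%E]_(dl : comm m) Vstar dl th.

Definition ThstarU : set 'rV[R]_p := [set th | exists dl, Thstar dl th].

Definition subopt (dl : comm m) (th : 'rV[R]_p) : Prop :=
  (Vstar dl th - Vmin th <= Order.max (eps_a D)%:E ((eps_r D)%:E * Vmin th))%E.

Definition subopt_on (dl : comm m) (S : set 'rV[R]_p) : Prop :=
  forall th, S th -> subopt dl th.

Definition Delta (dl : comm m) : Prop := Thstar dl `&` Theta D !=set0.

Definition overlap_prop (g : R) : Prop :=
  forall th, Theta D th ->
    exists dl, Delta dl /\ subopt_on dl (cball th g `&` Theta D).

Definition overlap : \bar R :=
  ereal_sup [set g%:E | g in [set g : R | 0 <= g /\ overlap_prop g]].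

Definition variability_prop (dl : comm m) (s : R) : Prop :=
  forall tho, Thstar dl tho ->
    let S := cball tho s `&` Thstar dl in
    (ereal_sup (Vstar dl @` S) - ereal_inf (Vstar dl @` S) <
       Order.max (eps_a D)%:E ((eps_r D)%:E * ereal_inf (Vmin @` S)))%E.

Definition variability (dl : comm m) : \bar R :=
  ereal_sup [set s%:E | s in [set s : R | 0 < s /\ variability_prop dl s]].

Definition psi : \bar R :=
  Order.min overlap (\big[Order.min/+oo%E]_(dl : comm m | `[< Delta dl >]) variability dl).

Definition vert := {ffun 'I_p.+1 -> 'rV[R]_p}.
Definition bvec := {ffun 'I_p.+1 -> R}.

Definition bary (V : vert) (th : 'rV[R]_p) (a : bvec) : Prop :=
  (forall i, 0 <= a i) /\ \sum_(i < p.+1) a i = 1 /\ th = \sum_(i < p.+1) a i *: V i.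

Definition simp (V : vert) : set 'rV[R]_p := [set th | exists a, bary V th a].

Definition aff_indep (V : vert) : Prop :=
  forall b : 'I_p.+1 -> R, \sum_(i < p.+1) b i = 0 ->
    \sum_(i < p.+1) b i *: V i = 0 -> forall i, b i = 0.

(* the barycentric coordinates of th (unique for a p-simplex) *)
Definition bcoord (V : vert) (th : 'rV[R]_p) : bvec := xget [ffun=> 0] (bary V th).

Definition Vbar (dl : comm m) (V : vert) (th : 'rV[R]_p) : \bar R :=
  (\sum_(i < p.+1) (bcoord V th i)%:E * Vstar dl (V i))%E.

Definition Pset (V : vert) (dl : comm m) : set ('rV[R]_p * comm m) :=
  [set q | simp V q.1 /\ q.2 != dl /\ Thstar q.2 q.1].

Definition ea (V : vert) (dl : comm m) : \bar R :=
  ereal_sup [set (Vbar dl V q.1 - Vstar q.2 q.1)%E | q in Pset V dl].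

Definition mu (V : vert) (dl : comm m) : \bar R :=
  ereal_inf [set Vstar q.2 q.1 | q in Pset V dl].

Definition er (V : vert) (dl : comm m) : \bar R :=
  (ea V dl * ((fine (mu V dl))^-1)%:E)%E.

Definition close_cond (V : vert) (dl : comm m) : Prop :=
  Pset V dl = set0 \/ (ea V dl <= (eps_a D)%:E)%E \/ (er V dl <= (eps_r D)%:E)%E.

Definition Dfeas (V : vert) (dl : comm m) (th : 'rV[R]_p) (e : R) (dl' : comm m) : Prop :=
  simp V th /\ dl' != dl /\ simp V `<=` Thstar dl' /\
  (Vstar dl' th <= Vbar dl V th - e%:E)%E /\
  (Order.max (eps_a D)%:E ((eps_r D)%:E * mu V dl) <= e%:E)%E.

Definition Dmaxcomp (V : vert) (dl dl' : comm m) : Prop :=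
  exists th e, Dfeas V dl th e dl' /\
    forall th2 e2 dl2, Dfeas V dl th2 e2 dl2 -> e2 <= e.

Definition small_var (V : vert) (dl : comm m) : Prop :=
  (ereal_sup (Vstar dl @` simp V) - ereal_inf (Vstar dl @` simp V) <
     Order.max (eps_a D)%:E ((eps_r D)%:E * ereal_inf (Vmin @` simp V)))%E.

Definition maxpair (V : vert) (i j : 'I_p.+1) : Prop :=
  forall a b, enorm (V a - V b) <= enorm (V i - V j).

Definition vmid (V : vert) (i j : 'I_p.+1) : 'rV[R]_p := 2^-1 *: (V i + V j).

Definition split1 (V : vert) (i j : 'I_p.+1) : vert :=
  [ffun k => if k == i then vmid V i j else V k].
Definition split2 (V : vert) (i j : 'I_p.+1) : vert :=
  [ffun k => if k == j then vmid V i j else V k].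

(* leaves; the open leaves are kept as a stack, most recently created first *)
Definition leaf := (vert * comm m)%type.

Definition split_push (V : vert) (dl : comm m) (rest s' : seq leaf) : Prop :=
  exists i j, maxpair V i j /\ s' = (split2 V i j, dl) :: (split1 V i j, dl) :: rest.

Definition step (s s' : seq leaf) : Prop :=
  match s with
  | [::] => False
  | (V, dl) :: rest =>
      (close_cond V dl /\ s' = rest) \/
      (~ close_cond V dl /\ exists dls, Dmaxcomp V dl dls /\
          ((small_var V dl /\ s' = (V, dls) :: rest) \/
           (~ small_var V dl /\ split_push V dls rest s'))) \/
      (~ close_cond V dl /\ ~ (exists th e dl', Dfeas V dl th e dl') /\
          split_push V dl rest s')
  end.

Definition valid_input (L : seq leaf) : Prop :=
  (forall lf, lf \in L -> aff_indep lf.1 /\ simp lf.1 `<=` Thstar lf.2) /\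
  (forall th, Theta D th <-> exists2 lf, lf \in L & simp lf.1 th).

End Problem.

From Pilot Require Import Defs.
From HB Require Import structures.
From mathcomp Require Import all_boot all_order all_algebra.
From mathcomp Require Import all_classical all_reals all_analysis.
From mathcomp Require Import ring lra zify.

Import Order.TTheory GRing.Theory Num.Theory.
Local Open Scope classical_set_scope.
Local Open Scope ring_scope.

(* Since the overlap and all variabilities are positive, so is psi, and there is an
   eps > 0 such that a simplex whose squared edge lengths are all at most eps lies in the
   psi-ball around its first vertex, a point of Theta.  If no selected leaf were that small,
   every iteration would strictly decrease the potential sum_leaves 3^mu(leaf): mu orders
   leaves lexicographically by an edge-length measure, which drops under longest-edge
   bisection of a simplex with an edge longer than sqrt eps, and by the rank of the
   commutation by its infimum of V*_delta on the simplex, which drops when D^R_delta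
   replaces delta; closing a leaf deletes a term.  No sequence of naturals decreases
   forever. *)

Set Implicit Arguments.
Unset Strict Implicit.

Section SquaredNorm.
Context {R : realType} {k : nat}.
Implicit Types x y z : 'rV[R]_k.

Definition sqnorm x : R := \sum_(i < k) x ord0 i ^+ 2.

Lemma sqnorm_ge0 x : 0 <= sqnorm x.
Proof. by apply: sumr_ge0 => i _; rewrite sqr_ge0. Qed.

Lemma sqnorm0 : sqnorm 0 = 0.
Proof. by rewrite /sqnorm big1 // => i _; rewrite mxE expr0n. Qed.

Lemma sqnorm_distC x y : sqnorm (x - y) = sqnorm (y - x).
Proof. by apply: eq_bigr => i _; rewrite -opprB mxE sqrrN. Qed.

Lemma ler_enorm x y : (enorm x <= enorm y) = (sqnorm x <= sqnorm y).
Proof. by rewrite /enorm ler_sqrt // sqnorm_ge0. Qed.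

Lemma sqr_coord_le_sqnorm x i : x ord0 i ^+ 2 <= sqnorm x.
Proof.
rewrite /sqnorm (bigD1 i) //= lerDl.
by apply: sumr_ge0 => j _; rewrite sqr_ge0.
Qed.

Lemma sqnorm_midpoint x y z : sqnorm (2^-1 *: (x + y) - z) =
  (sqnorm (x - z) + sqnorm (y - z)) / 2 - sqnorm (x - y) / 4.
Proof.
rewrite /sqnorm -big_split /= !mulr_suml -sumrB.
by apply: eq_bigr => i _; rewrite !mxE; field.
Qed.

End SquaredNorm.

Lemma normr_convex_comb_le {R : numDomainType} (I : finType) (a u : I -> R) (c : R) :
  (forall i, 0 <= a i) -> \sum_i a i = 1 -> (forall i, `|u i| <= c) ->
  `|\sum_i a i * u i| <= c.
Proof.
move=> a_ge0 a_sum1 u_le; apply: le_trans (ler_norm_sum _ _ _) _.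
rewrite -[c]mul1r -a_sum1 mulr_suml; apply: ler_sum => i _.
by rewrite normrM ger0_norm // ler_wpM2l.
Qed.

Lemma bernoulli_ineq {R : realFieldType} (x : R) n : 0 <= x -> 1 + n%:R * x <= (1 + x) ^+ n.
Proof.
move=> x_ge0; elim: n => [|n IH]; first by rewrite mul0r addr0 expr0.
rewrite exprS -natr1; have : 0 <= n%:R * x by rewrite mulr_ge0.
nra.
Qed.

Lemma no_decreasing_nat_seq (u : nat -> nat) : ~ (forall k, (u k.+1 < u k)%N).
Proof.
move=> u_lt; have u_bound k : (u k + k <= u 0)%N.
  by elim: k => [|k IH]; [rewrite addn0 | have := u_lt k; lia].
by have := u_bound (u 0%N).+1; lia.
Qed.

Section Simplex.
Context {R : realType} {p : nat}.
Implicit Types (V W : @vert R p) (x y : 'rV[R]_p).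

Lemma simp_vert V i : simp V (V i).
Proof.
exists [ffun k => (k == i)%:R]; split; [|split].
- by move=> k; rewrite ffunE ler0n.
- rewrite (bigD1 i) //= big1 ?ffunE ?eqxx ?addr0 // => k /negbTE.
  by rewrite ffunE => ->.
- rewrite (bigD1 i) //= big1 ?ffunE ?eqxx ?addr0 ?scale1r // => k /negbTE.
  by rewrite ffunE => ->; rewrite scale0r.
Qed.

Lemma simp_convex V x y t : simp V x -> simp V y -> 0 <= t <= 1 ->
  simp V (t *: x + (1 - t) *: y).
Proof.
move=> [a [a_ge0 [a_sum1 ->]]] [b [b_ge0 [b_sum1 ->]]] /andP[t_ge0 t_le1].
exists [ffun i => t * a i + (1 - t) * b i]; split; [|split].
- by move=> i; rewrite ffunE addr_ge0 ?mulr_ge0 ?subr_ge0.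
- under eq_bigr do rewrite ffunE.
  by rewrite big_split /= -!mulr_sumr a_sum1 b_sum1 !mulr1 addrC subrK.
- under [RHS]eq_bigr do rewrite ffunE scalerDl -!scalerA.
  by rewrite big_split /= -!scaler_sumr.
Qed.

Lemma simp_vmid V i j : simp V (vmid V i j).
Proof.
have -> : vmid V i j = 2^-1 *: V i + (1 - 2^-1) *: V j.
  by rewrite /vmid scalerDr; congr (_ + _ *: _); lra.
by apply: simp_convex; [exact: simp_vert | exact: simp_vert | lra].
Qed.

Lemma sub_simp V W : (forall k, simp V (W k)) -> simp W `<=` simp V.
Proof.
move=> W_in x [b [b_ge0 [b_sum1 ->]]].
have [c c_bary] := choice W_in.
exists [ffun i => \sum_k b k * c k i]; split; [|split].
- move=> i; rewrite ffunE; apply: sumr_ge0 => k _.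
  by rewrite mulr_ge0 //; case: (c_bary k).
- under eq_bigr do rewrite ffunE.
  rewrite exchange_big /= -b_sum1; apply: eq_bigr => k _.
  by rewrite -mulr_sumr; case: (c_bary k) => _ [-> _]; rewrite mulr1.
- under [RHS]eq_bigr do rewrite ffunE scaler_suml.
  rewrite exchange_big /=; apply: eq_bigr => k _.
  by under eq_bigr do rewrite -scalerA; rewrite -scaler_sumr; case: (c_bary k) => _ [_ <-].
Qed.

End Simplex.

Section Bisection.
Context {R : realType} {p : nat}.
Implicit Types V : @vert R p.

Definition bisect V (i j r : 'I_p.+1) : vert :=
  [ffun k => if k == r then vmid V i j else V k].

Lemma split1E V i j : Defs.split1 V i j = bisect V i j i. Proof. by []. Qed.
Lemma split2E V i j : Defs.split2 V i j = bisect V i j j. Proof. by []. Qed.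

Lemma bisect_other V i j r k : k != r -> bisect V i j r k = V k.
Proof. by rewrite ffunE => /negbTE ->. Qed.

Lemma simp_bisect V i j r : simp (bisect V i j r) `<=` simp V.
Proof.
apply: sub_simp => k; rewrite ffunE.
by case: ifP => _; [exact: simp_vmid | exact: simp_vert].
Qed.

Lemma maxpair_sqnorm V i j a b : maxpair V i j ->
  sqnorm (V a - V b) <= sqnorm (V i - V j).
Proof. by move=> ij_max; rewrite -ler_enorm. Qed.

Lemma sqnorm_bisect_le V i j r a b : maxpair V i j -> (a == r) || (b == r) ->
  sqnorm (bisect V i j r a - bisect V i j r b) <= 3/4 * sqnorm (V i - V j).
Proof.
move=> ij_max ab_r.
have vmid_le c : sqnorm (vmid V i j - V c) <= 3/4 * sqnorm (V i - V j).
  rewrite sqnorm_midpoint.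
  have := maxpair_sqnorm i c ij_max; have := maxpair_sqnorm j c ij_max; lra.
have ij_ge0 := sqnorm_ge0 (V i - V j).
rewrite !ffunE; case: ifP => a_r; case: ifP => b_r.
- by rewrite subrr sqnorm0 mulr_ge0.
- exact: vmid_le.
- by rewrite sqnorm_distC.
- by rewrite a_r b_r in ab_r.
Qed.

End Bisection.

Section Level.
Context {R : realType} (eps : R) (eps_gt0 : 0 < eps).

(* The ratio 4/3 undoes the factor 3/4 of [sqnorm_bisect_le]. *)

Lemma level_ex (x : R) : exists g, x <= eps * (4/3) ^+ g.
Proof.
have := archi_boundP (divr_ge0 (normr_ge0 x) (ltW eps_gt0)).
set g := Num.Def.archi_bound _; rewrite ltr_pdivrMr // => g_gt; exists (3 * g)%N.
have : 1 + (3 * g)%:R * 3^-1 <= (4/3 : R) ^+ (3 * g).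
  have -> : (4/3 : R) = 1 + 3^-1 by lra.
  exact: bernoulli_ineq.
rewrite natrM mulrAC divff ?mul1r; last by rewrite pnatr_eq0.
move=> bern; apply: le_trans (ler_norm x) _; apply: le_trans (ltW g_gt) _.
by rewrite mulrC ler_wpM2l ?(ltW eps_gt0) // (le_trans _ bern) // lerDr.
Qed.

Definition level x : nat := ex_minn (level_ex x).

Lemma level_ub x : x <= eps * (4/3) ^+ level x.
Proof. by rewrite /level; case: ex_minnP. Qed.

Lemma level_min x g : x <= eps * (4/3) ^+ g -> (level x <= g)%N.
Proof. by rewrite /level; case: ex_minnP => g0 _ /[apply]. Qed.

Lemma level_gt0 x : eps < x -> (0 < level x)%N.
Proof.
move=> eps_lt; rewrite lt0n; apply/eqP => x_level0.
by have := level_ub x; rewrite x_level0 expr0 mulr1; lra.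
Qed.

Lemma level_lt x y : eps < y -> x <= 3/4 * y -> (level x < level y)%N.
Proof.
move=> eps_lt x_le; have := level_ub y; rewrite -(prednK (level_gt0 eps_lt)).
by rewrite ltnS exprSr => y_le; apply: level_min; lra.
Qed.

End Level.

Section BisectionMeasure.
Context {R : realType} {p : nat} (eps : R) (eps_gt0 : 0 < eps).
Implicit Types V : @vert R p.
Local Notation edge := ('I_p.+1 * 'I_p.+1)%type.

Definition edge_weight V (e : edge) : nat :=
  #|{: edge}|.+1 ^ level eps_gt0 (sqnorm (V e.1 - V e.2)).

(* An edge outweighs all edges of lower level together, so trading the longest edge for
   edges of lower level decreases the sum. *)
Definition bisect_measure V : nat := \sum_(e : edge) edge_weight V e.

Lemma bisect_measure_lt V i j r : maxpair V i j -> eps < sqnorm (V i - V j) ->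
  (r == i) || (r == j) -> (bisect_measure (bisect V i j r) < bisect_measure V)%N.
Proof.
move=> ij_max ij_big r_ij; set N := #|{: edge}|.
set L := level eps_gt0 (sqnorm (V i - V j)).
have L_gt0 : (0 < L)%N by exact: level_gt0.
pose touch (e : edge) := (e.1 == r) || (e.2 == r).
have touch_lt e : touch e -> (edge_weight (bisect V i j r) e <= N.+1 ^ L.-1)%N.
  move=> e_r; rewrite leq_pexp2l // -ltnS prednK //.
  exact/(level_lt _ ij_big)/sqnorm_bisect_le.
rewrite /bisect_measure (bigID touch) [X in (_ < X)%N](bigID touch) /=.
rewrite addnC [X in (_ < X)%N]addnC.
have -> : \sum_(e | ~~ touch e) edge_weight (bisect V i j r) e =
          \sum_(e | ~~ touch e) edge_weight V e.
  by apply: eq_bigr => e /norP[e1 e2]; rewrite /edge_weight !bisect_other.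
rewrite ltn_add2l; apply: (@leq_ltn_trans (N * N.+1 ^ L.-1)).
  apply: leq_trans (leq_sum _ touch_lt) _.
  by rewrite sum_nat_cond_const leq_mul2r max_card orbT.
rewrite (bigD1 (i, j)) /=; last first.
  by rewrite /touch /=; case/orP: r_ij => /eqP ->; rewrite eqxx ?orbT.
apply: leq_trans (leq_addr _ _); rewrite /edge_weight /= -/L -/N.
by rewrite -[X in (_ < _ ^ X)%N](prednK L_gt0) expnS ltn_mul2r expn_gt0 ltnSn.
Qed.

End BisectionMeasure.

Section SmallSimplex.
Context {R : realType} {p : nat}.
Implicit Types V : @vert R p.

Lemma sqnorm_simp_le V (e : R) x : 0 <= e ->
  (forall a b, sqnorm (V a - V b) <= e) -> simp V x -> sqnorm (x - V ord0) <= p%:R * e.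
Proof.
move=> e_ge0 V_small [a [a_ge0 [a_sum1 ->]]].
have -> : \sum_i a i *: V i - V ord0 = \sum_i a i *: (V i - V ord0).
  by rewrite (eq_bigr _ (fun i _ => scalerBr _ _ _)) sumrB -scaler_suml a_sum1 scale1r.
have -> : p%:R * e = \sum_(k < p) e by rewrite sumr_const card_ord mulr_natl.
apply: ler_sum => k _; rewrite summxE -ler_sqrt // sqrtr_sqr.
under eq_bigr do rewrite mxE.
apply: normr_convex_comb_le => // i.
rewrite -sqrtr_sqr ler_sqrt //.
exact: le_trans (sqr_coord_le_sqnorm _ _) (V_small i ord0).
Qed.

Lemma small_simp_sub_ecball (r : \bar R) : (0 < p)%N -> (0 < r)%E ->
  exists2 e : R, 0 < e & forall V,
    (forall a b, sqnorm (V a - V b) <= e) -> simp V `<=` ecball (V ord0) r.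
Proof.
move=> p_gt0; case: r => [r| |] //=; last by exists 1 => // V _ x _; rewrite /ecball /= leey.
rewrite lte_fin => r_gt0.
have p_pos : (0 : R) < p%:R by rewrite ltr0n.
have e_gt0 : 0 < r ^+ 2 / p%:R by rewrite divr_gt0 // exprn_gt0.
exists (r ^+ 2 / p%:R) => // V V_small x x_in.
have := sqnorm_simp_le (ltW e_gt0) V_small x_in; rewrite mulrC divfK ?gt_eqF // => x_le.
by rewrite /ecball /= lee_fin -(ger0_norm (ltW r_gt0)) -sqrtr_sqr ler_sqrt ?sqr_ge0.
Qed.

End SmallSimplex.

Lemma psi_gt0 {R : realType} {p n m d l : nat} (D : data R p n m d l) :
  (0 < overlap D)%E -> (forall dl : comm m, Delta D dl -> (0 < variability D dl)%E) ->
  (0 < psi D)%E.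
Proof.
move=> overlap_gt0 variability_gt0; rewrite /psi lt_min overlap_gt0 /=.
apply: (big_ind (fun x => 0 < x)%E) => // [x y x_gt0 y_gt0|dl /asboolP].
  by rewrite lt_min x_gt0 y_gt0.
exact: variability_gt0.
Qed.

Lemma sube_lt_fin_num {R : realDomainType} (x y : \bar R) (c : R) :
  (x - y < c%:E)%E -> (-oo < x)%E -> (y < +oo)%E -> x \is a fin_num /\ y \is a fin_num.
Proof. by case: x y => [x| |] [y| |]. Qed.

Section ValueFunctions.
Context {R : realType} {p n m d l : nat} (D : data R p n m d l).
Hypothesis Vstar_neqNy : forall (dl : comm m) th, Vstar D dl th != -oo%E.
Implicit Types (V : @vert R p) (dl : comm m).

Definition inf_Vstar V dl : \bar R := ereal_inf (Vstar D dl @` simp V).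

Lemma Vstar_fin_num dl th : Thstar D dl th -> Vstar D dl th \is a fin_num.
Proof.
move=> [x x_feas]; rewrite fin_numE Vstar_neqNy /= lt_eqF //.
by apply: le_lt_trans (ereal_inf_lbound _) (ltry (pf D th x (bin R dl))); exists x.
Qed.

Lemma Vbar_le V dl th s : simp V `<=` Thstar D dl -> simp V th ->
  (forall i, Vstar D dl (V i) <= s%:E)%E -> (Vbar D dl V th <= s%:E)%E.
Proof.
move=> V_feas th_in Vi_le.
have [a_ge0 [a_sum1 _]] : bary V th (bcoord V th) := xgetPex _ th_in.
have Vi_fin i : Vstar D dl (V i) = (fine (Vstar D dl (V i)))%:E.
  by rewrite fineK // Vstar_fin_num //; apply: V_feas; exact: simp_vert.
rewrite /Vbar; under eq_bigr do rewrite Vi_fin -EFinM.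
rewrite sumEFin lee_fin -[s]mul1r -a_sum1 mulr_suml.
by apply: ler_sum => i _; rewrite ler_wpM2l // -lee_fin -Vi_fin.
Qed.

Lemma inf_Vmin_le_mu V dl : (ereal_inf (Vmin D @` simp V) <= mu D V dl)%E.
Proof.
apply: le_ereal_inf_tmp => _ [q [q_in _] <-].
apply: (@le_trans _ _ (Vmin D q.1)); first by apply: ereal_inf_lbound; exists q.1.
exact: bigmin_le.
Qed.

Hypothesis eps_r_ge0 : 0 <= eps_r D.

(* At a feasible point of D^R_delta, V*_dl' lies [e] below the interpolant of V*_dl,
   and [e] exceeds the variation of V*_dl on the simplex. *)
Lemma inf_Vstar_lt_of_Dfeas V dl dl' th e : simp V `<=` Thstar D dl ->
  Dfeas D V dl th e dl' -> small_var D V dl -> (inf_Vstar V dl' < inf_Vstar V dl)%E.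
Proof.
move=> V_feas [th_in [_ [_ [Vdl'_le tol]]]] small; rewrite /inf_Vstar.
set S := Vstar D dl @` simp V.
have v0_in : S (Vstar D dl (V ord0)) by exists (V ord0) => //; exact: simp_vert.
have v0_fin := Vstar_fin_num (V_feas _ (simp_vert V ord0)).
have gap : (ereal_sup S - ereal_inf S < e%:E)%E.
  apply: lt_le_trans small _; move: tol; rewrite !ge_max => /andP[-> /=].
  by apply: le_trans; rewrite lee_wpmul2l ?lee_fin // inf_Vmin_le_mu.
have sup_gtNy : (-oo < ereal_sup S)%E.
  by apply: lt_le_trans (ereal_sup_ubound v0_in); rewrite -(fineK v0_fin) ltNyr.
have inf_ltey : (ereal_inf S < +oo)%E.
  by apply: le_lt_trans (ereal_inf_lbound v0_in) _; rewrite -(fineK v0_fin) ltry.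
have [sup_fin inf_fin] := sube_lt_fin_num gap sup_gtNy inf_ltey.
move: gap; rewrite -(fineK sup_fin) -(fineK inf_fin).
set s := fine _; set t := fine _ => gap.
have Vbar_le_s : (Vbar D dl V th <= s%:E)%E.
  apply: Vbar_le => // i; rewrite /s fineK ?ereal_sup_ubound //.
  by exists (V i) => //; exact: simp_vert.
apply: le_lt_trans (ereal_inf_lbound _) _; first by exists th.
apply: le_lt_trans Vdl'_le _; apply: le_lt_trans (leeB Vbar_le_s (lexx _)) _.
by rewrite -EFinB lte_fin; rewrite -EFinB lte_fin in gap; lra.
Qed.

End ValueFunctions.

Lemma exp3D_lt a b c : (a < c)%N -> (b < c)%N -> (3 ^ a + 3 ^ b < 3 ^ c)%N.
Proof.
case: c => // c; rewrite !ltnS expnS => a_le b_le.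
have := leq_pexp2l (isT : (0 < 3)%N) a_le; have := leq_pexp2l (isT : (0 < 3)%N) b_le.
have : (0 < 3 ^ c)%N by rewrite expn_gt0.
lia.
Qed.

Section Run.
Context {R : realType} {p n m d l : nat} (D : data R p n m d l).
Implicit Types (V : @vert R p) (dl : comm m) (s : seq (@leaf R p m)).

Definition leaf_inv (lf : @leaf R p m) : Prop :=
  simp lf.1 `<=` Theta D /\ simp lf.1 `<=` Thstar D lf.2.

Lemma step_leaf_inv s s' : step D s s' ->
  {in s, forall lf, leaf_inv lf} -> {in s', forall lf, leaf_inv lf}.
Proof.
case: s => [//|[V dl] rest] /= step_s s_inv.
have [V_Theta V_feas] : leaf_inv (V, dl) by apply: s_inv; rewrite mem_head.
have rest_inv : {in rest, forall lf, leaf_inv lf}.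
  by move=> lf lf_in; apply: s_inv; rewrite in_cons lf_in orbT.
have split_inv dl0 : simp V `<=` Thstar D dl0 -> split_push V dl0 rest s' ->
    {in s', forall lf, leaf_inv lf}.
  move=> V_feas0 [i [j [_ ->]]] lf; rewrite !in_cons => /orP[/eqP ->|/orP[/eqP ->|]] //.
  - by split=> x /simp_bisect x_in; [exact: V_Theta | exact: V_feas0].
  - by split=> x /simp_bisect x_in; [exact: V_Theta | exact: V_feas0].
  exact: rest_inv.
case: step_s => [[_ ->] //|[[_ [dl' [[th [e [[_ [_ [V_feas' _]]] _]] next]]]]|[_ [_ next]]]].
- case: next => [[_ ->]|[_ next]]; last exact: split_inv next.
  by move=> lf; rewrite in_cons => /orP[/eqP ->|]; [split | exact: rest_inv].
- exact: split_inv V_feas next.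
Qed.

Definition comm_rank V dl : nat :=
  #|finset (fun dl' : comm m => (inf_Vstar D V dl' < inf_Vstar D V dl)%E)|.

Lemma comm_rank_lt V dl dl' : (inf_Vstar D V dl' < inf_Vstar D V dl)%E ->
  (comm_rank V dl' < comm_rank V dl)%N.
Proof.
move=> dl'_lt; apply: proper_card; apply/properP; split.
  by apply/fintype.subsetP => q; rewrite !inE => q_lt; apply: lt_trans q_lt dl'_lt.
by exists dl'; rewrite !inE ?dl'_lt // ltxx.
Qed.

Context (eps : R) (eps_gt0 : 0 < eps).

Definition leaf_measure (lf : @leaf R p m) : nat :=
  bisect_measure eps_gt0 lf.1 * #|{: comm m}|.+1 + comm_rank lf.1 lf.2.

(* Base 3 makes replacing a leaf by two leaves of smaller measure decrease the sum. *)
Definition potential s : nat := \sum_(lf <- s) 3 ^ leaf_measure lf.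

Lemma leaf_measure_bisect V i j r dl dl' : maxpair V i j -> eps < sqnorm (V i - V j) ->
  (r == i) || (r == j) -> (leaf_measure (bisect V i j r, dl') < leaf_measure (V, dl))%N.
Proof.
move=> ij_max ij_big r_ij; rewrite /leaf_measure /=.
have := bisect_measure_lt eps_gt0 ij_max ij_big r_ij.
have : (comm_rank (bisect V i j r) dl' <= #|{: comm m}|)%N by exact: max_card.
set K := #|{: comm m}|; move: (bisect_measure _ _) (bisect_measure _ V) => a b rank_le a_lt.
have : (a.+1 * K.+1 <= b * K.+1)%N by rewrite leq_mul2r a_lt orbT.
rewrite mulSn; lia.
Qed.

Lemma leaf_measure_replace V dl dl' : (inf_Vstar D V dl' < inf_Vstar D V dl)%E ->
  (leaf_measure (V, dl') < leaf_measure (V, dl))%N.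
Proof. by move=> dl'_lt; rewrite /leaf_measure ltn_add2l comm_rank_lt. Qed.

Hypothesis Vstar_neqNy : forall dl th, Vstar D dl th != -oo%E.
Hypothesis eps_r_ge0 : 0 <= eps_r D.

Lemma step_potential_lt V dl rest s' : step D ((V, dl) :: rest) s' ->
  leaf_inv (V, dl) -> ~ (forall a b, sqnorm (V a - V b) <= eps) ->
  (potential s' < potential ((V, dl) :: rest))%N.
Proof.
move=> /= step_s [_ V_feas] V_big; rewrite /potential big_cons.
have split_lt dl0 : split_push V dl0 rest s' ->
    (\sum_(lf <- s') 3 ^ leaf_measure lf <
     3 ^ leaf_measure (V, dl) + \sum_(lf <- rest) 3 ^ leaf_measure lf)%N.
  move=> [i [j [ij_max ->]]]; rewrite !big_cons addnA ltn_add2r split1E split2E.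
  have ij_big : eps < sqnorm (V i - V j).
    rewrite ltNge; apply/negP => ij_le; apply: V_big => a b.
    exact: le_trans (maxpair_sqnorm a b ij_max) ij_le.
  by apply: exp3D_lt; apply: leaf_measure_bisect; rewrite ?eqxx ?orbT.
case: step_s => [[_ ->]|[[_ [dl' [[th [e [feas _]] next]]]]|[_ [_ next]]]].
- by rewrite -[X in (X < _)%N]add0n ltn_add2r expn_gt0.
- case: next => [[small ->]|[_ next]]; last exact: split_lt next.
  rewrite big_cons ltn_add2r ltn_exp2l // leaf_measure_replace //.
  exact: inf_Vstar_lt_of_Dfeas feas small.
- exact: split_lt next.
Qed.

End Run.

Unset Implicit Arguments.

Theorem lemma4 (R : realType) (p n m d l : nat) (D : data R p n m d l)
  (Hp : (0 < p)%N) (Hn : (0 < n)%N) (Hm : (0 < m)%N) (Hd : (0 < d)%N) (Hl : (0 < l)%N)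
  (HK : convex_cone (pK D))
  (Hf : forall dl : comm m, jointly_convex (fun th x => pf D th x (bin R dl)))
  (Hg : forall dl : comm m, jointly_affine (fun th x => pg D th x (bin R dl)))
  (Hh : forall dl : comm m, jointly_affine (fun th x => ph D th x (bin R dl)))
  (HV : forall (dl : comm m) th, Vstar D dl th != -oo%E)
  (HTh : full_dim_polytope (Theta D))
  (HThs : Theta D `<=` ThstarU D)
  (Hea : 0 < eps_a D) (Her : 0 < eps_r D)
  (Hgamma : (0 < overlap D)%E)
  (Hsigma : forall dl : comm m, Delta D dl -> (0 < variability D dl)%E)
  (L : seq (@leaf R p m)) (HL : valid_input D L)
  (run : nat -> seq (@leaf R p m))
  (Hrun0 : run 0%N = L)
  (Hrun : forall k : nat, step D (run k) (run k.+1)) :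
  exists (k : nat) (V : @vert R p) (dl : comm m) (rest : seq (@leaf R p m)),
    run k = (V, dl) :: rest /\
    exists tho, Theta D tho /\ simp V `<=` ecball tho (psi D).
Proof.
have [eps eps_gt0 small_in_ball] := small_simp_sub_ecball Hp (psi_gt0 Hgamma Hsigma).
have run_inv k : {in run k, forall lf, leaf_inv D lf}.
  elim: k => [|k IH]; last exact: step_leaf_inv (Hrun k) IH.
  rewrite Hrun0 => lf lf_in; split; last exact: (proj1 HL lf lf_in).2.
  by move=> th th_in; apply/(proj2 HL th); exists lf.
have [[k [V [dl [rest [run_k V_small]]]]]|no_small] := pselect (exists k V dl rest,
    run k = (V, dl) :: rest /\ forall a b, sqnorm (V a - V b) <= eps).
  exists k, V, dl, rest; split=> //; exists (V ord0); split; last exact: small_in_ball.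
  have [V_Theta _] : leaf_inv D (V, dl) by apply: (run_inv k); rewrite run_k mem_head.
  exact/V_Theta/simp_vert.
exfalso; apply: (@no_decreasing_nat_seq (fun k => potential D eps_gt0 (run k))) => k.
have := Hrun k; case run_k: (run k) => [//|[V dl] rest] step_k.
apply: (step_potential_lt eps_gt0 HV (ltW Her) step_k).
  by apply: (run_inv k); rewrite run_k mem_head.
by move=> V_small; apply: no_small; exists k, V, dl, rest.
Qed.
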